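(* For a subsystem code with logical subsystem $\mathcal{H}_L$ of dimension at least $2$, the code price is at least the code distance: $p\ge d$.
   Context: Subsystem code: encoding isometry $V:\mathcal{H}_L\otimes\mathcal{H}_J\to\mathcal{H}_p$ onto a physical system of finitely many qudits; $\Pi=VV^\dagger$. $A$ is CSP if $[A,\Pi]=0$; bare-CSP if moreover $V^\dagger AV=A_L\otimes\mathrm{Id}_J$ (it implements $A_L\otimes\mathrm{Id}_J$). A region $R$ is a set of physical qudits; supported on $R$ means of the form $A_R\otimes\mathrm{Id}_{R^c}$. $R$ is correctable if for every $A_L\in\mathcal{B}(\mathcal{H}_L)$ there is a bare-CSP operator supported on $R^c$ implementing $A_L\otimes\mathrm{Id}_J$. Code distance $d=\min\{|R|: R\text{ not correctable}\}$; code price $p=\min\{|R|: R^c\text{ correctable}\}$, with $|R|$ the number of qudits. *)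

From HB Require Import structures.
From mathcomp Require Import all_boot all_order all_algebra.
Set Implicit Arguments. Unset Strict Implicit. Unset Printing Implicit Defensive.
Import Order.TTheory GRing.Theory Num.Theory.
Local Open Scope ring_scope.

Section Codes.
Variable C : numClosedFieldType.

(* An operator from a space with basis T to a space with basis U, as a matrix
   (row index in U, column index in T). *)
Definition op (U T : finType) := U -> T -> C.

Definition opmul (U T S : finType) (A : op U T) (B : op T S) : op U S :=
  fun u s => \sum_(t : T) A u t * B t s.

Definition opadj (U T : finType) (A : op U T) : op T U := fun t u => (A u t)^*.

Definition opid (T : finType) : op T T := fun t t' => (t == t')%:R.

Definition optens (T1 T2 : finType) (A : op T1 T1) (B : op T2 T2) : op (T1 * T2)%type (T1 * T2)%type :=
  fun x y => A x.1 y.1 * B x.2 y.2.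

(* Physical system: n qudits, qudit i has local dimension dims i.
   Computational basis of H_p: configurations. *)
Variable n : nat.
Variable dims : 'I_n -> nat.
Definition conf : finType := {dffun forall i : 'I_n, 'I_(dims i)}.
(* Basis of the Hilbert space of the qudits in a region R *)
Definition rconf (R : {set 'I_n}) : finType := {dffun forall i : {i : 'I_n | i \in R}, 'I_(dims (sval i))}.
Definition restr (R : {set 'I_n}) (x : conf) : rconf R := [ffun i => x (sval i)].

(* A is supported on R: A = A_R (x) Id_{R^c}, written in the product basis. *)
Definition supported_on (R : {set 'I_n}) (A : op conf conf) : Prop :=
  exists AR : op (rconf R) (rconf R),
    forall x y : conf,
      A x y = AR (restr R x) (restr R y) * (restr (~: R) x == restr (~: R) y)%:R.

(* Logical subsystem of dimension dL, gauge subsystem of dimension dJ. *)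
Variables dL dJ : nat.
Definition cbasis : finType := ('I_dL * 'I_dJ)%type.
Variable V : op conf cbasis.   (* encoding map H_L (x) H_J -> H_p *)

Definition code_isometry := opmul (opadj V) V = @opid cbasis.
Definition code_proj : op conf conf := opmul V (opadj V).

Definition is_CSP (A : op conf conf) : Prop := opmul A code_proj = opmul code_proj A.

Definition bare_CSP_impl (A : op conf conf) (AL : op 'I_dL 'I_dL) : Prop :=
  is_CSP A /\ opmul (opadj V) (opmul A V) = optens AL (@opid 'I_dJ).

Definition correctable (R : {set 'I_n}) : Prop :=
  forall AL : op 'I_dL 'I_dL,
    exists A : op conf conf, supported_on (~: R) A /\ bare_CSP_impl A AL.

Definition is_code_distance (d : nat) : Prop :=
  (exists R : {set 'I_n}, ~ correctable R /\ #|R| = d) /\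
  (forall R : {set 'I_n}, ~ correctable R -> (d <= #|R|)%N).

Definition is_code_price (p : nat) : Prop :=
  (exists R : {set 'I_n}, correctable (~: R) /\ #|R| = p) /\
  (forall R : {set 'I_n}, correctable (~: R) -> (p <= #|R|)%N).

End Codes.

(* If both R and its complement were correctable, every logical operator would
   have one bare implementation supported on R and another on the complement.
   Operators with complementary supports commute, and bare implementations
   multiply like the logical operators they implement, so all logical operators
   would commute; this is impossible as soon as dim H_L >= 2.  Hence a region
   realising the price is not correctable, and d <= p. *)
From mathcomp Require Import all_boot all_order all_algebra.
From Stdlib Require Import FunctionalExtensionality.
Set Implicit Arguments. Unset Strict Implicit. Unset Printing Implicit Defensive.
Import Order.TTheory GRing.Theory Num.Theory.
Local Open Scope ring_scope.

Section Operators.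
Variable C : numClosedFieldType.

Lemma op_ext (U T : finType) (A B : op C U T) : (forall u t, A u t = B u t) -> A = B.
Proof.
by move=> eAB; apply: functional_extensionality => u; apply: functional_extensionality.
Qed.

Lemma opmulA (U T S W : finType) (A : op C U T) (B : op C T S) (D : op C S W) :
  opmul (opmul A B) D = opmul A (opmul B D).
Proof.
apply: op_ext => u w; rewrite /opmul.
under eq_bigr do rewrite big_distrl.
rewrite exchange_big /=; apply: eq_bigr => t _.
by rewrite big_distrr /=; apply: eq_bigr => s _; rewrite mulrA.
Qed.

Lemma opmul1 (U T : finType) (A : op C U T) : opmul A (@opid C T) = A.
Proof.
apply: op_ext => u t; rewrite /opmul /opid (bigD1 t) //= eqxx mulr1.
by rewrite big1 ?addr0 // => s /negbTE ->; rewrite mulr0.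
Qed.

Lemma optens_mul (T1 T2 : finType) (X Z : op C T1 T1) (Y W : op C T2 T2) :
  opmul (optens X Y) (optens Z W) = optens (opmul X Z) (opmul Y W).
Proof.
apply: op_ext => u s; rewrite /opmul /optens big_distrl /=.
under [RHS]eq_bigr do rewrite big_distrr /=.
by rewrite pair_bigA /=; apply: eq_bigr => -[a b] _ /=; rewrite mulrACA.
Qed.

Lemma optens_id_inj (T1 T2 : finType) (j : T2) (X Y : op C T1 T1) :
  optens X (@opid C T2) = optens Y (@opid C T2) -> X = Y.
Proof.
move=> eXY; apply: op_ext => a b.
by have := congr1 (fun F => F (a, j) (b, j)) eXY; rewrite /optens /opid eqxx !mulr1.
Qed.

Definition opunit (T : finType) (i j : T) : op C T T :=
  fun a b => ((a == i) && (b == j))%:R.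

Lemma opunit_noncomm (T : finType) (i j : T) : i != j ->
  opmul (opunit i j) (opunit i i) <> opmul (opunit i i) (opunit i j).
Proof.
rewrite eq_sym => /negbTE nji /(congr1 (fun F => F i j)); rewrite /opmul /opunit.
rewrite big1 => [|t _]; last by rewrite nji andbF mulr0.
rewrite (bigD1 i) //= big1 ?addr0 => [|t /negbTE ->]; last by rewrite andbF mul0r.
by rewrite !eqxx mulr1 => /eqP; rewrite eq_sym oner_eq0.
Qed.

End Operators.

Section Supports.
Variables (C : numClosedFieldType) (n : nat) (dims : 'I_n -> nat).

Lemma restrP (R : {set 'I_n}) (x y : conf dims) :
  reflect {in R, forall i, x i = y i} (restr R x == restr R y).
Proof.
apply: (iffP eqP) => [exy i iR | exy].
  by have := congr1 (fun f : rconf dims R => f (exist _ i iR)) exy; rewrite !ffunE.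
by apply/ffunP => -[i iR]; rewrite !ffunE /= exy.
Qed.

(* The sum over y collapses onto the configuration agreeing with z on P and
   with x on Q. *)
Lemma sum_supported_compl (P Q : {set 'I_n}) (a : op C (rconf dims P) (rconf dims P))
    (b : op C (rconf dims Q) (rconf dims Q)) (x z : conf dims) : Q = ~: P ->
  \sum_(y : conf dims) (a (restr P x) (restr P y) * (restr Q x == restr Q y)%:R) *
     (b (restr Q y) (restr Q z) * (restr P y == restr P z)%:R)
  = a (restr P x) (restr P z) * b (restr Q x) (restr Q z).
Proof.
move=> eQ; pose m : conf dims := [ffun i => if i \in P then z i else x i].
have mP : restr P m = restr P z by apply/eqP/restrP => i iP; rewrite ffunE iP.
have mQ : restr Q m = restr Q x.
  by apply/eqP/restrP => i; rewrite eQ inE ffunE => /negbTE ->.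
rewrite (bigD1 m) //= big1 ?addr0 => [|y ym]; first by rewrite mP mQ !eqxx !mulr1.
case: eqP => [/eqP/restrP yQ|_]; last by rewrite /= mulr0 mul0r.
case: eqP => [/eqP/restrP yP|_]; last by rewrite /= !mulr0.
case/eqP: ym; apply/ffunP => i; rewrite ffunE.
by case: ifP => iP; [rewrite yP | rewrite yQ // eQ inE iP].
Qed.

Lemma supported_compl_commute (P : {set 'I_n}) (A B : op C (conf dims) (conf dims)) :
  supported_on P A -> supported_on (~: P) B -> opmul A B = opmul B A.
Proof.
move=> [a eA] [b eB]; rewrite setCK in eB; apply: op_ext => x z; rewrite /opmul.
under eq_bigr do rewrite eA eB.
rewrite sum_supported_compl //.
under eq_bigr do rewrite eA eB.
by rewrite sum_supported_compl ?setCK // mulrC.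
Qed.

End Supports.

Section Code.
Variables (C : numClosedFieldType) (n : nat) (dims : 'I_n -> nat).
Variables (dL dJ : nat) (V : op C (conf dims) (cbasis dL dJ)).
Hypothesis isoV : code_isometry V.

Lemma code_proj_fixes : opmul (code_proj V) V = V.
Proof. by rewrite /code_proj opmulA isoV opmul1. Qed.

Lemma compress_mul_CSP (A B : op C (conf dims) (conf dims)) : is_CSP V B ->
  opmul (opadj V) (opmul (opmul A B) V) =
  opmul (opmul (opadj V) (opmul A V)) (opmul (opadj V) (opmul B V)).
Proof.
move=> cspB; have BV : opmul B V = opmul V (opmul (opadj V) (opmul B V)).
  by rewrite -{1}code_proj_fixes -opmulA cspB /code_proj !opmulA.
by rewrite opmulA {1}BV !opmulA.
Qed.

Lemma bare_CSP_impl_mul (A B : op C (conf dims) (conf dims)) (AL BL : op C 'I_dL 'I_dL) :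
  bare_CSP_impl V A AL -> bare_CSP_impl V B BL ->
  opmul (opadj V) (opmul (opmul A B) V) = optens (opmul AL BL) (@opid C 'I_dJ).
Proof.
by move=> [_ implA] [cspB implB]; rewrite compress_mul_CSP // implA implB optens_mul opmul1.
Qed.

(* With dJ = 0 the code space is trivial, so the zero operator implements every
   logical operator. *)
Lemma correctable_trivial_gauge (R : {set 'I_n}) : dJ = 0%N -> correctable V R.
Proof.
move=> dJ0 AL; exists (fun _ _ => 0); split; first by exists (fun _ _ => 0) => x y; rewrite mul0r.
split; last by apply: op_ext => -[u [j lt_jdJ]]; exfalso; rewrite dJ0 in lt_jdJ.
by apply: op_ext => x y; rewrite /opmul !big1 // => t _; rewrite ?mul0r ?mulr0.
Qed.

Lemma correctable_compl_commute (R : {set 'I_n}) : (0 < dJ)%N ->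
  correctable V R -> correctable V (~: R) ->
  forall AL BL : op C 'I_dL 'I_dL, opmul AL BL = opmul BL AL.
Proof.
move=> dJ_gt0 corrR corrRc AL BL.
have [A [suppA implA]] := corrR AL; have [B [suppB implB]] := corrRc BL.
apply: (optens_id_inj (Ordinal dJ_gt0)).
rewrite -(bare_CSP_impl_mul implA implB) -(bare_CSP_impl_mul implB implA).
by rewrite (supported_compl_commute suppA suppB).
Qed.

End Code.

Theorem lemma3 (C : numClosedFieldType) (n : nat) (dims : 'I_n -> nat)
  (dL dJ : nat) (V : op C (conf dims) (cbasis dL dJ))
  (hV : code_isometry V) (hL : (2 <= dL)%N) (d p : nat)
  (hd : is_code_distance V d) (hp : is_code_price V p) :
  (d <= p)%N.
Proof.
move: hd hp => [[R0 [ncR0 _]] d_min] [[R [corrRc <-]] _].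
apply: d_min => corrR.
have dJ_gt0 : (0 < dJ)%N.
  by rewrite lt0n; apply/eqP => dJ0; exact: ncR0 (correctable_trivial_gauge V R0 dJ0).
pose i0 : 'I_dL := Ordinal (ltnW hL); pose i1 : 'I_dL := Ordinal hL.
apply: (@opunit_noncomm C _ i0 i1 isT).
exact: (correctable_compl_commute hV dJ_gt0 corrR corrRc).
Qed.
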